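(* Consider the planar system \[ \frac{dx}{dt}= x\Big(1-\frac{x}{\gamma}\Big)-\frac{xy}{(1+\alpha\xi)(\omega x^2+1)+x},\qquad \frac{dy}{dt}= \frac{\delta\big(x+\xi(\omega x^2+1)\big)y}{(1+\alpha\xi)(\omega x^2+1)+x}-my-\epsilon y^2, \] with positive parameters $\gamma,\alpha,\xi,\omega,\delta,m,\epsilon$ satisfying $\delta>m$. Then every solution of this system with initial condition in the positive quadrant ($x(0)>0$, $y(0)>0$) remains bounded.
   Context: $x(t)$ and $y(t)$ denote the (nondimensionalized) prey and predator densities; $\gamma$ is the prey carrying capacity, $\alpha$ the quality and $\xi$ the quantity of additional food given to predators, $\omega$ the prey group defence parameter, $\delta$ the maximal predator growth rate, $m$ the predator mortality rate and $\epsilon$ the intra-specific competition coefficient among predators. *)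

From Stdlib Require Import Reals.
From Coquelicot Require Import Coquelicot.
Open Scope R_scope.

Definition den (alpha xi omega x : R) : R :=
  (1 + alpha * xi) * (omega * x ^ 2 + 1) + x.

Definition fx (gamma alpha xi omega x y : R) : R :=
  x * (1 - x / gamma) - x * y / den alpha xi omega x.

Definition fy (alpha xi omega delta m eps x y : R) : R :=
  delta * (x + xi * (omega * x ^ 2 + 1)) * y / den alpha xi omega x
  - m * y - eps * y ^ 2.

Definition is_solution (gamma alpha xi omega delta m eps : R) (T : Rbar)
  (x y : R -> R) : Prop :=
  filterlim x (at_right 0) (locally (x 0)) /\
  filterlim y (at_right 0) (locally (y 0)) /\
  (forall t, 0 < t -> Rbar_lt (Finite t) T ->
     is_derive x t (fx gamma alpha xi omega (x t) (y t)) /\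
     is_derive y t (fy alpha xi omega delta m eps (x t) (y t))).

(* Both right-hand sides are the population times a per-capita rate.  On a
   compact time interval inside (0, T) the rates are bounded below by some -K,
   so f e^((K+1)t) increases wherever f > 0 and can never fall to half its
   value at the start of the interval: x and y stay positive.  Then x' < 0
   whenever x > gamma, and y' < 0 whenever y > delta (1 + xi) / eps, because
   the predator's numerical response delta (x + xi (omega x^2 + 1)) / den is at
   most delta (1 + xi).  At the first time a level above such a threshold is
   hit from below the derivative would have to be nonnegative, so x and y stay
   below max(initial value, threshold) + 1. *)

From Stdlib Require Import Reals Lra.
From Coquelicot Require Import Coquelicot.
Open Scope R_scope.

Lemma continuous_near (f : R -> R) (r : R) (P : R -> Prop) :
  continuous f r -> open P -> P (f r) ->
  exists d, 0 < d /\ forall u, Rabs (u - r) < d -> P (f u).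
Proof.
  intros Hc HP Hr.
  destruct (Hc P (HP _ Hr)) as [d Hd].
  exists d; split; [apply cond_pos | exact Hd].
Qed.

Lemma first_hitting_time (f : R -> R) (a t L : R) :
  a <= t -> (forall z, a <= z <= t -> continuous f z) -> f a < L -> L <= f t ->
  exists r, a < r <= t /\ f r = L /\ forall s, a <= s < r -> f s < L.
Proof.
  intros Hat Hc Ha Ht.
  set (E := fun u => a <= u <= t /\ forall v, a <= v <= u -> f v < L).
  assert (HEa : E a) by (split; [lra | intros v Hv; replace v with a by lra; exact Ha]).
  destruct (completeness E) as [r [Hub Hlub]].
  { exists t; intros u Hu; apply Hu. }
  { exists a; exact HEa. }
  assert (Har : a <= r) by (apply Hub, HEa).
  assert (Hrt : r <= t) by (apply Hlub; intros u Hu; apply Hu).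
  assert (Hbefore : forall s, a <= s < r -> f s < L).
  { intros s Hs. destruct (Rlt_le_dec (f s) L) as [|Hfs]; [assumption | exfalso].
    assert (r <= s); [|lra].
    apply Hlub; intros u [Hu Hv].
    destruct (Rle_lt_dec u s) as [|Hsu]; [assumption|].
    specialize (Hv s ltac:(lra)); lra. }
  destruct (Rtotal_order (f r) L) as [Hlt | [Heq | Hgt]].
  - exfalso. destruct (Req_dec r t) as [<- | Hrt']; [lra|].
    destruct (continuous_near f r _ (Hc r ltac:(lra)) (open_lt L) Hlt) as [d [Hd Hnear]].
    set (u := r + Rmin (d / 2) (t - r)).
    pose proof (Rmin_l (d / 2) (t - r)); pose proof (Rmin_r (d / 2) (t - r)).
    assert (0 < Rmin (d / 2) (t - r)) by (apply Rmin_glb_lt; lra).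
    assert (HEu : E u).
    { split; [unfold u; lra|]. intros v Hv.
      destruct (Rlt_le_dec v r); [apply Hbefore; lra|].
      apply Hnear. unfold u in Hv. rewrite Rabs_pos_eq; lra. }
    specialize (Hub u HEu). unfold u in Hub. lra.
  - exists r. split; [|split; assumption].
    split; [|assumption]. destruct Har as [|<-]; [assumption | lra].
  - exfalso. assert (Har' : a < r) by (destruct Har as [|<-]; [assumption | lra]).
    destruct (continuous_near f r _ (Hc r ltac:(lra)) (open_gt L) Hgt) as [d [Hd Hnear]].
    set (s := r - Rmin (d / 2) (r - a)).
    pose proof (Rmin_l (d / 2) (r - a)); pose proof (Rmin_r (d / 2) (r - a)).
    assert (0 < Rmin (d / 2) (r - a)) by (apply Rmin_glb_lt; lra).
    assert (L < f s) by (apply Hnear; unfold s; rewrite Rabs_left; lra).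
    assert (f s < L) by (apply Hbefore; unfold s; lra).
    lra.
Qed.

Lemma is_derive_neg_left (f : R -> R) (r l : R) :
  is_derive f r l -> l < 0 -> exists d, 0 < d /\ forall s, r - d < s < r -> f r < f s.
Proof.
  intros Hd Hl. apply is_derive_Reals in Hd.
  destruct (Hd (- l) ltac:(lra)) as [d Hdd].
  exists d; split; [apply cond_pos|]. intros s Hs.
  specialize (Hdd (s - r) ltac:(lra) ltac:(rewrite Rabs_left; lra)).
  replace (r + (s - r)) with s in Hdd by ring.
  apply Rabs_def2 in Hdd.
  assert (Hq : (f s - f r) / (s - r) < 0) by lra.
  assert (f s - f r = (f s - f r) / (s - r) * (s - r)) by (field; lra).
  nra.
Qed.

Lemma level_not_crossed (f df : R -> R) (a b L : R) :
  (forall z, a <= z <= b -> is_derive f z (df z)) -> f a < L ->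
  (forall z, a < z <= b -> f z = L -> df z < 0) ->
  forall t, a <= t <= b -> f t < L.
Proof.
  intros Hd Ha Hdown t Ht.
  destruct (Rlt_le_dec (f t) L) as [|HLt]; [assumption | exfalso].
  destruct (first_hitting_time f a t L) as [r [Hr [Hfr Hbefore]]]; try easy.
  { intros z Hz. apply (ex_derive_continuous f z). exists (df z). apply Hd; lra. }
  destruct (is_derive_neg_left f r (df r)) as [d [Hd0 Hafter]].
  { apply Hd; lra. }
  { apply Hdown; [lra | exact Hfr]. }
  set (s := r - Rmin (d / 2) (r - a)).
  pose proof (Rmin_l (d / 2) (r - a)); pose proof (Rmin_r (d / 2) (r - a)).
  assert (0 < Rmin (d / 2) (r - a)) by (apply Rmin_glb_lt; lra).
  assert (f r < f s) by (apply Hafter; unfold s; lra).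
  assert (f s < L) by (apply Hbefore; unfold s; lra).
  lra.
Qed.

Lemma positive_of_growth_lower_bound (f df : R -> R) (a b K : R) :
  (forall z, a <= z <= b -> is_derive f z (df z)) -> 0 < f a ->
  (forall z, a <= z <= b -> 0 < f z -> - K * f z <= df z) ->
  forall t, a <= t <= b -> 0 < f t.
Proof.
  intros Hd Ha Hlow t Ht.
  set (w := fun u => - (f u * exp ((K + 1) * u))).
  set (dw := fun u => - ((df u + (K + 1) * f u) * exp ((K + 1) * u))).
  assert (Hdw : forall z, a <= z <= b -> is_derive w z (dw z)).
  { intros z Hz. unfold w, dw.
    assert (He : is_derive (fun u => exp ((K + 1) * u)) z ((K + 1) * exp ((K + 1) * z)))
      by (auto_derive; [easy | ring]).
    pose proof (is_derive_opp _ _ _ (is_derive_mult _ _ _ _ _ (Hd z Hz) He Rmult_comm)) as Hw.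
    simpl in Hw. unfold opp, plus, mult in Hw; simpl in Hw.
    replace (- ((df z + (K + 1) * f z) * exp ((K + 1) * z)))
      with (- (df z * exp ((K + 1) * z) + f z * ((K + 1) * exp ((K + 1) * z)))) by ring.
    exact Hw. }
  set (c := f a * exp ((K + 1) * a)).
  assert (Hc : 0 < c) by (apply Rmult_lt_0_compat; [exact Ha | apply exp_pos]).
  assert (Hwt : w t < - c / 2).
  { apply (level_not_crossed w dw a b); [exact Hdw | unfold w; fold c; lra | | exact Ht].
    intros z Hz Hwz. unfold w, dw in *.
    pose proof (exp_pos ((K + 1) * z)).
    assert (Hfz : 0 < f z) by nra.
    pose proof (Hlow z ltac:(lra) Hfz).
    assert (0 < df z + (K + 1) * f z) by nra.
    nra. }
  unfold w in Hwt. pose proof (exp_pos ((K + 1) * t)). nra.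
Qed.

Section SolutionOnRightOpenInterval.

Variables (f df : R -> R) (T : Rbar).
Hypothesis f_cont0 : filterlim f (at_right 0) (locally (f 0)).
Hypothesis f_deriv : forall t, 0 < t -> Rbar_lt t T -> is_derive f t (df t).

Lemma is_derive_on_compact (a b : R) :
  0 < a -> Rbar_lt b T -> forall z, a <= z <= b -> is_derive f z (df z).
Proof.
  intros Ha HbT z Hz. apply f_deriv; [lra|].
  apply (Rbar_le_lt_trans _ b); [simpl; lra | exact HbT].
Qed.

Lemma bounded_on_compact (a b : R) :
  0 < a -> a <= b -> Rbar_lt b T -> exists M, forall t, a <= t <= b -> Rabs (f t) <= M.
Proof.
  intros Ha Hab HbT.
  destruct (continuity_ab_maj (fun t => Rabs (f t)) a b Hab) as [c [Hc _]].
  { intros z Hz. apply continuity_pt_filterlim.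
    apply (continuous_comp f Rabs); [|apply continuous_Rabs].
    apply (ex_derive_continuous f z). exists (df z).
    exact (is_derive_on_compact a b Ha HbT z Hz). }
  exists (Rabs (f c)). exact Hc.
Qed.

Lemma near_initial_value (t e : R) :
  0 < t -> 0 < e -> exists a, 0 < a <= t /\ Rabs (f a - f 0) < e.
Proof.
  intros Ht He.
  destruct (f_cont0 (ball (f 0) (mkposreal e He))) as [d Hd].
  { now exists (mkposreal e He). }
  pose proof (cond_pos d).
  pose proof (Rmin_l (d / 2) t); pose proof (Rmin_r (d / 2) t).
  assert (Hpos : 0 < Rmin (d / 2) t) by (apply Rmin_glb_lt; lra).
  exists (Rmin (d / 2) t). split; [lra|].
  apply (Hd (Rmin (d / 2) t)); [|exact Hpos].
  change (Rabs (Rmin (d / 2) t - 0) < d). rewrite Rminus_0_r, Rabs_pos_eq; lra.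
Qed.

Lemma positive_of_local_growth_lower_bound :
  0 < f 0 ->
  (forall a b, 0 < a -> a <= b -> Rbar_lt b T ->
     exists K, forall t, a <= t <= b -> 0 < f t -> - K * f t <= df t) ->
  forall t, 0 <= t -> Rbar_lt t T -> 0 < f t.
Proof.
  intros Hf0 Hgrowth t Ht HtT.
  destruct Ht as [Ht | <-]; [|exact Hf0].
  destruct (near_initial_value t (f 0) Ht Hf0) as [a [Ha Hfa]].
  apply Rabs_def2 in Hfa.
  destruct (Hgrowth a t ltac:(lra) ltac:(lra) HtT) as [K HK].
  apply (positive_of_growth_lower_bound f df a t K); [| lra | exact HK | lra].
  apply is_derive_on_compact; [lra | exact HtT].
Qed.

Lemma bounded_above_of_decreasing_above (B : R) :
  (forall t, 0 < t -> Rbar_lt t T -> B < f t -> df t < 0) ->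
  forall t, 0 <= t -> Rbar_lt t T -> f t < Rmax (f 0) B + 1.
Proof.
  intros Hdown t Ht HtT.
  pose proof (Rmax_l (f 0) B); pose proof (Rmax_r (f 0) B).
  destruct Ht as [Ht | <-]; [|lra].
  destruct (near_initial_value t 1 Ht Rlt_0_1) as [a [Ha Hfa]].
  apply Rabs_def2 in Hfa.
  apply (level_not_crossed f df a t); [| lra | | lra].
  - apply is_derive_on_compact; [lra | exact HtT].
  - intros z Hz Hfz. apply Hdown; [lra | | lra].
    apply (Rbar_le_lt_trans _ t); [simpl; lra | exact HtT].
Qed.

End SolutionOnRightOpenInterval.

Section Model.

Variables gamma alpha xi omega delta m eps : R.
Hypotheses (gamma_pos : 0 < gamma) (alpha_pos : 0 < alpha) (xi_pos : 0 < xi)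
  (omega_pos : 0 < omega) (delta_pos : 0 < delta) (m_pos : 0 < m) (eps_pos : 0 < eps).

Definition prey_rate (x y : R) : R := 1 - x / gamma - y / den alpha xi omega x.

Definition predator_rate (x y : R) : R :=
  delta * (x + xi * (omega * x ^ 2 + 1)) / den alpha xi omega x - m - eps * y.

Lemma fx_prey_rate (x y : R) : fx gamma alpha xi omega x y = x * prey_rate x y.
Proof. unfold fx, prey_rate, Rdiv. ring. Qed.

Lemma fy_predator_rate (x y : R) :
  fy alpha xi omega delta m eps x y = y * predator_rate x y.
Proof. unfold fy, predator_rate, Rdiv. ring. Qed.

Lemma den_ge (x : R) : 0 <= x -> omega * x ^ 2 + 1 + x <= den alpha xi omega x.
Proof.
  intros Hx. unfold den.
  assert (0 <= omega * x ^ 2) by (apply Rmult_le_pos; [lra | apply pow_le, Hx]).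
  assert (0 <= alpha * xi) by (apply Rmult_le_pos; lra).
  nra.
Qed.

Lemma den_ge1 (x : R) : 0 <= x -> 1 <= den alpha xi omega x.
Proof.
  intros Hx. pose proof (den_ge x Hx).
  assert (0 <= omega * x ^ 2) by (apply Rmult_le_pos; [lra | apply pow_le, Hx]).
  lra.
Qed.

Lemma prey_rate_ge (x y X Y : R) :
  0 <= x <= X -> Rabs y <= Y -> - (X / gamma + Y) <= prey_rate x y.
Proof.
  intros Hx Hy. unfold prey_rate.
  pose proof (den_ge1 x ltac:(lra)) as Hden.
  assert (x / gamma <= X / gamma) by (apply Rmult_le_compat_r; [left; apply Rinv_0_lt_compat |]; lra).
  assert (y / den alpha xi omega x <= Y).
  { apply Rle_div_l; [lra|]. pose proof (Rle_abs y). pose proof (Rabs_pos y). nra. }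
  assert (0 <= X / gamma) by (apply Rdiv_le_0_compat; lra).
  lra.
Qed.

Lemma prey_rate_neg (x y : R) : gamma < x -> 0 <= y -> prey_rate x y < 0.
Proof.
  intros Hx Hy. unfold prey_rate.
  pose proof (den_ge1 x ltac:(lra)) as Hden.
  assert (1 < x / gamma) by (apply Rlt_div_r; lra).
  assert (0 <= y / den alpha xi omega x) by (apply Rdiv_le_0_compat; lra).
  lra.
Qed.

Lemma predator_rate_ge (x y Y : R) :
  0 <= x -> y <= Y -> - (m + eps * Y) <= predator_rate x y.
Proof.
  intros Hx Hy. unfold predator_rate.
  pose proof (den_ge1 x Hx) as Hden.
  assert (0 <= omega * x ^ 2) by (apply Rmult_le_pos; [lra | apply pow_le, Hx]).
  assert (0 <= delta * (x + xi * (omega * x ^ 2 + 1)) / den alpha xi omega x)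
    by (apply Rdiv_le_0_compat; [apply Rmult_le_pos|]; nra).
  nra.
Qed.

Lemma predator_rate_neg (x y : R) :
  0 <= x -> delta * (1 + xi) / eps < y -> predator_rate x y < 0.
Proof.
  intros Hx Hy. unfold predator_rate.
  pose proof (den_ge x Hx) as Hden.
  assert (0 <= omega * x ^ 2) by (apply Rmult_le_pos; [lra | apply pow_le, Hx]).
  assert (delta * (x + xi * (omega * x ^ 2 + 1)) / den alpha xi omega x <= delta * (1 + xi)).
  { apply Rle_div_l; [lra|].
    assert (x + xi * (omega * x ^ 2 + 1) <= (1 + xi) * den alpha xi omega x) by nra.
    nra. }
  assert (delta * (1 + xi) < eps * y) by (apply Rlt_div_l in Hy; lra).
  lra.
Qed.

Lemma fx_ge_linear (x y X Y : R) :
  0 < x -> Rabs x <= X -> Rabs y <= Y -> - (X / gamma + Y) * x <= fx gamma alpha xi omega x y.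
Proof.
  intros Hx HX HY. rewrite fx_prey_rate.
  pose proof (Rle_abs x).
  pose proof (prey_rate_ge x y X Y ltac:(lra) HY). nra.
Qed.

Lemma fx_neg (x y : R) : gamma < x -> 0 <= y -> fx gamma alpha xi omega x y < 0.
Proof.
  intros Hx Hy. rewrite fx_prey_rate.
  pose proof (prey_rate_neg x y Hx Hy). nra.
Qed.

Lemma fy_ge_linear (x y Y : R) :
  0 <= x -> 0 < y -> Rabs y <= Y -> - (m + eps * Y) * y <= fy alpha xi omega delta m eps x y.
Proof.
  intros Hx Hy HY. rewrite fy_predator_rate.
  pose proof (Rle_abs y).
  pose proof (predator_rate_ge x y Y Hx ltac:(lra)). nra.
Qed.

Lemma fy_neg (x y : R) :
  0 <= x -> delta * (1 + xi) / eps < y -> fy alpha xi omega delta m eps x y < 0.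
Proof.
  intros Hx Hy. rewrite fy_predator_rate.
  pose proof (predator_rate_neg x y Hx Hy).
  assert (0 < y) by (assert (0 <= delta * (1 + xi) / eps) by (apply Rdiv_le_0_compat; nra); lra).
  nra.
Qed.

End Model.

Theorem mainTheorem1 (gamma alpha xi omega delta m eps : R) (T : Rbar)
  (x y : R -> R) :
  0 < gamma -> 0 < alpha -> 0 < xi -> 0 < omega -> 0 < delta -> 0 < m ->
  0 < eps -> delta > m ->
  Rbar_lt (Finite 0) T ->
  is_solution gamma alpha xi omega delta m eps T x y ->
  0 < x 0 -> 0 < y 0 ->
  exists M : R, forall t, 0 <= t -> Rbar_lt (Finite t) T ->
    Rabs (x t) <= M /\ Rabs (y t) <= M.
Proof.
  intros Hg Ha Hxi Hom Hdel Hm Heps _ _ [Hx0c [Hy0c Hder]] Hx0 Hy0.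
  set (dx := fun t => fx gamma alpha xi omega (x t) (y t)).
  set (dy := fun t => fy alpha xi omega delta m eps (x t) (y t)).
  assert (Hdx : forall t, 0 < t -> Rbar_lt t T -> is_derive x t (dx t)) by apply Hder.
  assert (Hdy : forall t, 0 < t -> Rbar_lt t T -> is_derive y t (dy t)) by apply Hder.
  assert (Hxpos : forall t, 0 <= t -> Rbar_lt t T -> 0 < x t).
  { apply (positive_of_local_growth_lower_bound x dx T Hx0c Hdx Hx0).
    intros a b Ha' Hab HbT.
    destruct (bounded_on_compact x dx T Hdx a b Ha' Hab HbT) as [X HX].
    destruct (bounded_on_compact y dy T Hdy a b Ha' Hab HbT) as [Y HY].
    exists (X / gamma + Y). intros t Ht Hxt. apply fx_ge_linear; auto. }
  assert (Hypos : forall t, 0 <= t -> Rbar_lt t T -> 0 < y t).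
  { apply (positive_of_local_growth_lower_bound y dy T Hy0c Hdy Hy0).
    intros a b Ha' Hab HbT.
    destruct (bounded_on_compact y dy T Hdy a b Ha' Hab HbT) as [Y HY].
    exists (m + eps * Y). intros t Ht Hyt. apply fy_ge_linear; auto.
    apply Rlt_le, Hxpos; [lra|]. apply (Rbar_le_lt_trans _ b); [simpl; lra | exact HbT]. }
  pose proof (bounded_above_of_decreasing_above x dx T Hx0c Hdx gamma
    (fun t Ht HtT Hxt => fx_neg _ _ _ _ Hg Ha Hxi Hom _ _ Hxt
       (Rlt_le _ _ (Hypos t (Rlt_le _ _ Ht) HtT)))) as Hxle.
  pose proof (bounded_above_of_decreasing_above y dy T Hy0c Hdy (delta * (1 + xi) / eps)
    (fun t Ht HtT Hyt => fy_neg _ _ _ _ _ _ Ha Hxi Hom Hdel Hm Heps _ _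
       (Rlt_le _ _ (Hxpos t (Rlt_le _ _ Ht) HtT)) Hyt)) as Hyle.
  set (Bx := Rmax (x 0) gamma + 1); set (By := Rmax (y 0) (delta * (1 + xi) / eps) + 1).
  exists (Rmax Bx By). intros t Ht HtT.
  rewrite !Rabs_pos_eq by (apply Rlt_le; auto).
  split; [apply Rle_trans with Bx | apply Rle_trans with By];
    auto using Rlt_le, Rmax_l, Rmax_r.
Qed.
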